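(* For every $(i,j)\in\mathcal I_1$ there exist integers $z_1,z_2$ and signs such that $$F_{ij}F_{<(i,j)}=\pm q^{z_1}F_{\le(i,j)},\qquad F_{>(i,j)}F_{ij}=\pm q^{z_2}F_{\ge(i,j)}.$$
   Context: Let $m,n\ge 1$, let $q$ be an indeterminate, and let indices range over $[1,m+n]$. Put $q_i=q$ if $i\le m$ and $q_i=q^{-1}$ if $i>m$. Let $\mathcal I_0=\{(i,j):1\le i<j\le m \text{ or } m+1\le i<j\le m+n\}$, $\mathcal I_1=\{(i,j):1\le i\le m<j\le m+n\}$. The quantum supergroup $U_q=U_q(\mathfrak{gl}(m|n))$ is the associative $\mathbb C(q)$-superalgebra generated by $K_j^{\pm1}$ ($j\in[1,m+n]$) and $E_{i,i+1},F_{i,i+1}$ ($1\le i<m+n$), where $K_j^{\pm1}$ and $E_{i,i+1},F_{i,i+1}$ for $i\ne m$ are even and $E_{m,m+1},F_{m,m+1}$ are odd, subject to: $K_iK_j=K_jK_i$, $K_iK_i^{-1}=1$; $K_iE_{j,j+1}K_i^{-1}=q_i^{\delta_{ij}-\delta_{i,j+1}}E_{j,j+1}$, $K_iF_{j,j+1}K_i^{-1}=q_i^{-(\delta_{ij}-\delta_{i,j+1})}F_{j,j+1}$; $[E_{i,i+1},F_{j,j+1}]=\delta_{ij}\frac{K_iK_{i+1}^{-1}-K_i^{-1}K_{i+1}}{q_i-q_i^{-1}}$; $E_{m,m+1}^2=F_{m,m+1}^2=0$; $E_{i,i+1}E_{j,j+1}=E_{j,j+1}E_{i,i+1}$ and $F_{i,i+1}F_{j,j+1}=F_{j,j+1}F_{i,i+1}$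 for $|i-j|>1$; for $|i-j|=1$, $i\neq m$, and $X\in\{E,F\}$: $X_{i,i+1}^2X_{j,j+1}-(q+q^{-1})X_{i,i+1}X_{j,j+1}X_{i,i+1}+X_{j,j+1}X_{i,i+1}^2=0$; and $[E_{m-1,m+2},E_{m,m+1}]=[F_{m-1,m+2},F_{m,m+1}]=0$. Here for homogeneous $x,y$, $[x,y]=xy-(-1)^{\bar x\bar y}yx$. For $i<j$ with $j>i+1$, $E_{ij}=E_{ic}E_{cj}-q_c^{-1}E_{cj}E_{ic}$ and $F_{ij}=-q_cF_{ic}F_{cj}+F_{cj}F_{ic}$ for $i<c<j$ (independent of $c$); $E_{ij},F_{ij}$ are odd iff $(i,j)\in\mathcal I_1$. Order on $\mathcal I_1$: $(i,j)\prec(s,t)$ iff $j>t$, or $j=t$ and $i<s$. For $I\subseteq\mathcal I_1$, $F_I$ is the product of the $F_{ij}$, $(i,j)\in I$, taken in increasing $\prec$-order ($F_\emptyset=1$). For $(i,j)\in\mathcal I_1$, $F_{\ge(i,j)}$, $F_{>(i,j)}$, $F_{\le(i,j)}$, $F_{<(i,j)}$ denote $F_I$ for $I=\{(s,t)\in\mathcal I_1:(s,t)\succeq(i,j)\}$, $\{(s,t):(s,t)\succ(i,j)\}$, $\{(s,t):(s,t)\preceq(i,j)\}$, $\{(s,t):(s,t)\prec(i,j)\}$ respectively. *)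

From HB Require Import structures.
From mathcomp Require Import all_boot all_order all_algebra all_field.
Set Implicit Arguments. Unset Strict Implicit. Unset Printing Implicit Defensive.
Import Order.TTheory GRing.Theory Num.Theory.
Local Open Scope ring_scope.

(* The base field C(q): rational functions in an indeterminate over the
   (algebraic) complex numbers algC, and the indeterminate q itself. *)
Definition Cq : fieldType := {fraction {poly algC}}.
Definition qX : Cq := tofrac 'X.

Section Uq.
Variables (K : fieldType) (A : algType K) (m n : nat) (q : K).

Definition qi (i : nat) : K := if (i <= m)%N then q else q^-1.

(* parity of the simple generator E_{i,i+1} / F_{i,i+1}: odd iff i = m *)
Definition par (i : nat) : bool := i == m.

Definition sbr (pa pb : bool) (x y : A) : A := x * y - (-1) ^+ (pa && pb) * (y * x).

Definition dexp (i j : nat) : int := ((i == j) : nat)%:Z - ((i == j.+1) : nat)%:Z.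

Variables (Kp Km E F : nat -> A).
(* Kp i = K_i, Km i = K_i^{-1}, E i = E_{i,i+1}, F i = F_{i,i+1} *)

(* Eg i k = E_{i,i+k+1}, using E_{ij} = E_{ic}E_{cj} - q_c^{-1} E_{cj}E_{ic} with c = j-1 *)
Fixpoint Eg (i k : nat) : A :=
  match k with
  | 0 => E i
  | k'.+1 => let c := (i + k').+1 in Eg i k' * E c - (qi c)^-1 *: (E c * Eg i k')
  end.

(* Fg i k = F_{i,i+k+1}, using F_{ij} = -q_c F_{ic}F_{cj} + F_{cj}F_{ic} with c = j-1 *)
Fixpoint Fg (i k : nat) : A :=
  match k with
  | 0 => F i
  | k'.+1 => let c := (i + k').+1 in - (qi c *: (Fg i k' * F c)) + F c * Fg i k'
  end.

Definition Eij (i j : nat) : A := Eg i (j - i).-1.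
Definition Fij (i j : nat) : A := Fg i (j - i).-1.

(* I_1 = {(i,j) : 1 <= i <= m < j <= m+n}, listed in increasing order for the
   order (i,j) < (s,t) iff j > t, or j = t and i < s. *)
Definition I1seq : seq (nat * nat) :=
  flatten [seq [seq (a, b) | a <- iota 1 m] | b <- rev (iota m.+1 n)].

Definition precI1 (p r : nat * nat) : bool :=
  (r.2 < p.2)%N || ((p.2 == r.2) && (p.1 < r.1)%N).

Definition FI (P : pred (nat * nat)) : A :=
  \prod_(p <- I1seq | P p) Fij p.1 p.2.

Definition F_lt (r : nat * nat) : A := FI (fun p => precI1 p r).
Definition F_le (r : nat * nat) : A := FI (fun p => precI1 p r || (p == r)).
Definition F_gt (r : nat * nat) : A := FI (fun p => precI1 r p).
Definition F_ge (r : nat * nat) : A := FI (fun p => precI1 r p || (p == r)).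

Record Uq_rels : Prop := {
  K_comm : forall i j, (1 <= i <= m + n)%N -> (1 <= j <= m + n)%N ->
    Kp i * Kp j = Kp j * Kp i;
  K_invr : forall i, (1 <= i <= m + n)%N -> Kp i * Km i = 1;
  K_invl : forall i, (1 <= i <= m + n)%N -> Km i * Kp i = 1;
  KE : forall i j, (1 <= i <= m + n)%N -> (1 <= j < m + n)%N ->
    Kp i * E j * Km i = (qi i ^ dexp i j) *: E j;
  KF : forall i j, (1 <= i <= m + n)%N -> (1 <= j < m + n)%N ->
    Kp i * F j * Km i = (qi i ^ (- dexp i j)) *: F j;
  EF : forall i j, (1 <= i < m + n)%N -> (1 <= j < m + n)%N ->
    sbr (par i) (par j) (E i) (F j) =
    if i == j then (qi i - (qi i)^-1)^-1 *: (Kp i * Km i.+1 - Km i * Kp i.+1)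
    else 0;
  E_sq : E m * E m = 0;
  F_sq : F m * F m = 0;
  E_far : forall i j, (1 <= i < m + n)%N -> (1 <= j < m + n)%N ->
    (i.+1 < j)%N || (j.+1 < i)%N -> E i * E j = E j * E i;
  F_far : forall i j, (1 <= i < m + n)%N -> (1 <= j < m + n)%N ->
    (i.+1 < j)%N || (j.+1 < i)%N -> F i * F j = F j * F i;
  E_serre : forall i j, (1 <= i < m + n)%N -> (1 <= j < m + n)%N ->
    (i.+1 == j) || (j.+1 == i) -> i != m ->
    E i * E i * E j - (q + q^-1) *: (E i * E j * E i) + E j * E i * E i = 0;
  F_serre : forall i j, (1 <= i < m + n)%N -> (1 <= j < m + n)%N ->
    (i.+1 == j) || (j.+1 == i) -> i != m ->
    F i * F i * F j - (q + q^-1) *: (F i * F j * F i) + F j * F i * F i = 0;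
  (* [E_{m-1,m+2}, E_{m,m+1}] = 0 (both odd); only meaningful when m, n >= 2 *)
  E_extra : (2 <= m)%N -> (2 <= n)%N -> sbr true true (Eij m.-1 m.+2) (E m) = 0;
  F_extra : (2 <= m)%N -> (2 <= n)%N -> sbr true true (Fij m.-1 m.+2) (F m) = 0
}.

End Uq.

From HB Require Import structures.
From mathcomp Require Import all_boot all_order all_algebra all_field zify.
Import Order.TTheory GRing.Theory Num.Theory.
Local Open Scope ring_scope.
Set Implicit Arguments. Unset Strict Implicit. Unset Printing Implicit Defensive.

(* The odd root vectors F_{ab} (a <= m < b) form an m x n rectangle, and F_I
   lists its members column by column, from the last column to the first and
   each column from top to bottom.  F_{ij} q-commutes, up to a sign and a power
   of q, with every root vector of its own column.  It does not q-commute with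
   the individual root vectors of another column t, but it does with their
   product.  For t > j this is because F_{ij} is an iterated q-bracket of the
   generators F_k (i <= k < j), each of which q-commutes with column t; for
   k = m this rests on the extra relation {F_{m-1,m+2}, F_m} = 0.  For t < j,
   F_{ij} is an iterated q-bracket of F_{m,t+1} and of generators that
   q-commute with column t.  F_{m,t+1} anticommutes with each F_{s,t} (s < m)
   only modulo left multiples of F_{m,t}, but these error terms die in the
   column product because F_{m,t}^2 = 0; the anticommutation itself comes from
   the extra relation, transported along the row to {F_{m-1,t+1}, F_{m,t}} = 0.
   So F_{ij} moves through F_{<(i,j)} and F_{>(i,j)} at the cost of a factor
   +-q^z. *)

Lemma indet_neq0 : qX != 0.
Proof. by rewrite /qX tofrac_eq0 polyX_eq0. Qed.

Lemma qX_addV_neq0 : qX + qX^-1 != 0.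
Proof.
have -> : qX + qX^-1 = (qX ^+ 2 + 1) / qX by rewrite mulrDl expr2 mulfK ?indet_neq0 // div1r.
rewrite mulf_eq0 invr_eq0 (negbTE indet_neq0) orbF.
have -> : qX ^+ 2 + 1 = tofrac ('X^2 + 1%:P : {poly algC}).
  by rewrite rmorphD rmorphXn /= rmorph1.
by rewrite tofrac_eq0 monic_neq0 // monicXnaddC.
Qed.

(* A reflexive normaliser for identities in an algebra over [Cq] whose
   scalars are Laurent polynomials in [qX] with integer coefficients. *)

Inductive scalar_expr :=
  | SQpow of int | S0
  | SAdd of scalar_expr & scalar_expr
  | SMul of scalar_expr & scalar_expr
  | SOpp of scalar_expr.

Inductive nc_expr :=
  | NVar of nat | N0 | N1
  | NAdd of nc_expr & nc_expr
  | NMul of nc_expr & nc_expr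
  | NOpp of nc_expr
  | NScale of scalar_expr & nc_expr.

(* A monomial [(c, z, w)] stands for [c q^z] times the word [w] in the variables. *)
Definition monomial := (int * int * seq nat)%type.

Fixpoint scalar_terms (s : scalar_expr) : seq (int * int) :=
  match s with
  | SQpow z => [:: (1, z)] | S0 => [::]
  | SAdd a b => scalar_terms a ++ scalar_terms b
  | SMul a b => [seq (x.1 * y.1, x.2 + y.2) | x <- scalar_terms a, y <- scalar_terms b]
  | SOpp a => [seq (- x.1, x.2) | x <- scalar_terms a]
  end.

Fixpoint nc_terms (t : nc_expr) : seq monomial :=
  match t with
  | NVar i => [:: (1, 0, [:: i])] | N0 => [::] | N1 => [:: (1, 0, [::])]
  | NAdd a b => nc_terms a ++ nc_terms b
  | NMul a b => [seq (x.1.1 * y.1.1, x.1.2 + y.1.2, x.2 ++ y.2)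
                 | x <- nc_terms a, y <- nc_terms b]
  | NOpp a => [seq (- x.1.1, x.1.2, x.2) | x <- nc_terms a]
  | NScale s a => [seq (c.1 * x.1.1, c.2 + x.1.2, x.2) | c <- scalar_terms s, x <- nc_terms a]
  end.

Fixpoint add_monomial (x : monomial) (p : seq monomial) : seq monomial :=
  if p is y :: p' then
    if (x.1.2 == y.1.2) && (x.2 == y.2) then (x.1.1 + y.1.1, x.1.2, x.2) :: p'
    else y :: add_monomial x p'
  else [:: x].

Definition nc_normal (p : seq monomial) : seq monomial :=
  [seq x <- foldr add_monomial [::] p | x.1.1 != 0].

Fixpoint scalar_eval (s : scalar_expr) : Cq :=
  match s with
  | SQpow z => qX ^ z | S0 => 0
  | SAdd a b => scalar_eval a + scalar_eval b
  | SMul a b => scalar_eval a * scalar_eval b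
  | SOpp a => - scalar_eval a
  end.

Lemma scalar_termsE s : scalar_eval s = \sum_(x <- scalar_terms s) x.1%:~R * qX ^ x.2.
Proof.
elim: s => /= [z||a IHa b IHb|a IHa b IHb|a IHa].
- by rewrite big_seq1 mul1r.
- by rewrite big_nil.
- by rewrite big_cat IHa IHb.
- rewrite big_allpairs_dep IHa IHb mulr_suml; apply: eq_bigr => x _.
  rewrite mulr_sumr; apply: eq_bigr => y _ /=.
  by rewrite intrM expfzDr ?indet_neq0 // mulrACA.
- by rewrite big_map IHa -sumrN; apply: eq_bigr => x _; rewrite intrN mulNr.
Qed.

Section NcEval.
Variables (A : algType Cq) (env : seq A).

Fixpoint nc_eval (t : nc_expr) : A :=
  match t with
  | NVar i => env`_i | N0 => 0 | N1 => 1
  | NAdd a b => nc_eval a + nc_eval b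
  | NMul a b => nc_eval a * nc_eval b
  | NOpp a => - nc_eval a
  | NScale s a => scalar_eval s *: nc_eval a
  end.

Definition monomial_eval (x : monomial) : A :=
  (x.1.1%:~R * qX ^ x.1.2) *: \prod_(i <- x.2) env`_i.

Definition terms_eval (p : seq monomial) : A := \sum_(x <- p) monomial_eval x.

Lemma nc_termsE t : nc_eval t = terms_eval (nc_terms t).
Proof.
rewrite /terms_eval; elim: t => /= [i||| a IHa b IHb | a IHa b IHb | a IHa | s a IHa].
- by rewrite big_seq1 /monomial_eval /= mul1r expr0z scale1r big_seq1.
- by rewrite big_nil.
- by rewrite big_seq1 /monomial_eval /= mul1r expr0z scale1r big_nil.
- by rewrite big_cat IHa IHb.
- rewrite big_allpairs_dep IHa IHb mulr_suml; apply: eq_bigr => x _.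
  rewrite mulr_sumr; apply: eq_bigr => y _ /=.
  rewrite /monomial_eval /= big_cat -scalerAl -scalerAr scalerA.
  by rewrite intrM expfzDr ?indet_neq0 // mulrACA.
- rewrite big_map IHa -sumrN; apply: eq_bigr => x _.
  by rewrite /monomial_eval /= intrN mulNr scaleNr.
- rewrite big_allpairs_dep IHa scalar_termsE scaler_suml; apply: eq_bigr => c _.
  rewrite scaler_sumr; apply: eq_bigr => x _ /=.
  by rewrite /monomial_eval /= scalerA intrM expfzDr ?indet_neq0 // mulrACA.
Qed.

Lemma add_monomialE x p :
  terms_eval (add_monomial x p) = monomial_eval x + terms_eval p.
Proof.
rewrite /terms_eval; elim: p => [|y p IH] /=; first by rewrite big_seq1 big_nil addr0.
case: ifP => [/andP [/eqP ez /eqP ew]|_]; last by rewrite !big_cons IH addrCA.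
rewrite !big_cons addrA; congr (_ + _).
by rewrite /monomial_eval /= -ez -ew rmorphD mulrDl scalerDl.
Qed.

Lemma nc_normalE p : terms_eval (nc_normal p) = terms_eval p.
Proof.
have -> : terms_eval p = terms_eval (foldr add_monomial [::] p).
  elim: p => [|x p IH] //=.
  by rewrite add_monomialE -IH /terms_eval big_cons.
rewrite /terms_eval big_filter [RHS](bigID (fun x : monomial => x.1.1 != 0)) /=.
rewrite [X in _ + X]big1 ?addr0 // => x /negPn /eqP x0.
by rewrite /monomial_eval x0 mul0r scale0r.
Qed.

Lemma nc_sound a b : nc_normal (nc_terms (NAdd a (NOpp b))) = [::] -> nc_eval a = nc_eval b.
Proof.
move=> h; apply/eqP; rewrite -subr_eq0.
by rewrite -[_ - _]/(nc_eval (NAdd a (NOpp b))) nc_termsE -nc_normalE h /terms_eval big_nil.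
Qed.

End NcEval.

Ltac find_index x l :=
  lazymatch l with
  | x :: _ => constr:(0%N)
  | _ :: ?l' => let n := find_index x l' in constr:(n.+1)
  end.

Ltac reify_scalar c :=
  lazymatch c with
  | qX => constr:(SQpow 1)
  | qX^-1 => constr:(SQpow (-1))
  | qX ^+ ?k => constr:(SQpow (Posz k))
  | qX ^- ?k => constr:(SQpow (- Posz k))
  | 1 => constr:(SQpow 0)
  | 0 => constr:(S0)
  | ?a + ?b => let x := reify_scalar a in let y := reify_scalar b in constr:(SAdd x y)
  | ?a * ?b => let x := reify_scalar a in let y := reify_scalar b in constr:(SMul x y)
  | - ?a => let x := reify_scalar a in constr:(SOpp x)
  end.

Ltac reify_nc env t :=
  lazymatch t with
  | ?a + ?b => let x := reify_nc env a in let y := reify_nc env b in constr:(NAdd x y)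
  | ?a * ?b => let x := reify_nc env a in let y := reify_nc env b in constr:(NMul x y)
  | - ?a => let x := reify_nc env a in constr:(NOpp x)
  | ?c *: ?a => let s := reify_scalar c in let x := reify_nc env a in constr:(NScale s x)
  | 0 => constr:(N0)
  | 1 => constr:(N1)
  | _ => let i := find_index t env in constr:(NVar i)
  end.

(* Every atom of the goal must occur in [env]. *)
Ltac nc_ring env :=
  lazymatch goal with
  | |- ?L = ?R =>
    let a := reify_nc env L in let b := reify_nc env R in
    apply: (@nc_sound _ env a b); vm_compute; reflexivity
  end.

Definition signed_qpow (s : bool) (z : int) : Cq := (-1) ^+ s * qX ^ z.

Lemma signed_qpow_neq0 s z : signed_qpow s z != 0.
Proof. by rewrite mulf_eq0 signr_eq0 expfz_eq0 (negbTE indet_neq0) andbF. Qed.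

Lemma signed_qpowD s1 z1 s2 z2 :
  signed_qpow s1 z1 * signed_qpow s2 z2 = signed_qpow (s1 (+) s2) (z1 + z2).
Proof. by rewrite /signed_qpow signr_addb expfzDr ?indet_neq0 // mulrACA. Qed.

Lemma signed_qpowV s z : (signed_qpow s z)^-1 = signed_qpow s (- z).
Proof. by rewrite /signed_qpow invfM invr_sign invr_expz. Qed.

Lemma signr_signed_qpow k s z : (-1) ^+ k * signed_qpow s z = signed_qpow (odd k (+) s) z.
Proof. by rewrite /signed_qpow signr_addb signr_odd mulrA. Qed.

Section QBracket.
Variable A : algType Cq.
Implicit Types (c k : Cq) (a b f w x y : A).

Definition qbr c x y := x * y - c *: (y * x).

Definition serre f x := f * f * x - (qX + qX^-1) *: (f * x * f) + x * f * f.

Definition qcommute x y := exists (s : bool) (z : int), x * y = signed_qpow s z *: (y * x).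

Lemma commr_qbr c x a b : GRing.comm x a -> GRing.comm x b -> GRing.comm x (qbr c a b).
Proof.
move=> xa xb; apply: commrB; first exact: commrM.
by rewrite /GRing.comm -scalerAr -scalerAl (commrM xb xa).
Qed.

Lemma qbrA c d x y w : GRing.comm x w -> qbr c x (qbr d y w) = qbr d (qbr c x y) w.
Proof.
rewrite /qbr => xw.
rewrite !(mulrBr, mulrBl) -!(scalerAr, scalerAl) !scalerBr !scalerA !mulrA.
have -> : x * w * y = w * x * y by rewrite xw.
have -> : y * w * x = y * x * w by rewrite -!mulrA xw.
rewrite [d * c]mulrC !opprB !addrA [LHS]addrAC [RHS]addrAC.
by congr (_ + _); rewrite addrAC.
Qed.

Lemma qbr_flip c x y : c != 0 -> qbr c x y = - c *: qbr c^-1 y x.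
Proof. by move=> c0; rewrite /qbr scalerBr scalerA mulNr mulfV // scaleN1r opprK scaleNr addrC. Qed.

Lemma qcommute_sym x y : qcommute x y -> qcommute y x.
Proof.
case=> s [z xy]; exists s, (- z).
by rewrite xy scalerA -signed_qpowV mulVf ?signed_qpow_neq0 ?scale1r.
Qed.

Lemma commr_qcommute x y : GRing.comm x y -> qcommute x y.
Proof. by move=> xy; exists false, 0; rewrite /signed_qpow mul1r expr0z scale1r. Qed.

Lemma qcommuteM x a b : qcommute x a -> qcommute x b -> qcommute x (a * b).
Proof.
case=> s1 [z1 xa] [s2 [z2 xb]]; exists (s1 (+) s2), (z1 + z2).
by rewrite mulrA xa -scalerAl -(mulrA a x b) xb -scalerAr scalerA (mulrA a b x) -signed_qpowD.
Qed.

Lemma qcommuteZ x k a : qcommute x a -> qcommute x (k *: a).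
Proof. by case=> s [z xa]; exists s, z; rewrite -scalerAr xa -scalerAl !scalerA mulrC. Qed.

Lemma qcommute_prod x (I : eqType) (r : seq I) (P : pred I) (G : I -> A) :
  (forall i, i \in r -> P i -> qcommute x (G i)) -> qcommute x (\prod_(i <- r | P i) G i).
Proof.
elim: r => [|i r IH] xG; first by rewrite big_nil; apply/commr_qcommute/commr1.
have {}IH : qcommute x (\prod_(j <- r | P j) G j).
  by apply: IH => j jr; apply: xG; rewrite inE jr orbT.
by rewrite big_cons; case: ifP => Pi //; apply: qcommuteM IH; apply: xG; rewrite ?mem_head.
Qed.

(* [x] q-commutes with [a b] and [b a] by the same factor. *)
Lemma qcommute_qbr c x a b : qcommute x a -> qcommute x b -> qcommute x (qbr c a b).
Proof.
case=> s1 [z1 xa] [s2 [z2 xb]]; exists (s1 (+) s2), (z1 + z2).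
have xab : x * (a * b) = signed_qpow (s1 (+) s2) (z1 + z2) *: (a * b * x).
  by rewrite mulrA xa -scalerAl -(mulrA a x b) xb -scalerAr scalerA (mulrA a b x) -signed_qpowD.
have xba : x * (b * a) = signed_qpow (s1 (+) s2) (z1 + z2) *: (b * a * x).
  rewrite mulrA xb -scalerAl -(mulrA b x a) xa -scalerAr scalerA (mulrA b a x).
  by rewrite mulrC -signed_qpowD.
rewrite /qbr mulrBr -scalerAr xab xba mulrBl -scalerAl scalerBr.
by rewrite !scalerA mulrC.
Qed.

Lemma qcommute_qbr_sqr0 c f x : x * x = 0 -> c = qX \/ c = qX^-1 ->
  qcommute x (qbr c f x).
Proof.
move=> xx0 qc; have c0 : c != 0 by case: qc => ->; rewrite ?invr_eq0 indet_neq0.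
have l : x * qbr c f x = x * f * x.
  by rewrite /qbr mulrBr -scalerAr (mulrA x x) xx0 mul0r scaler0 subr0 mulrA.
have r : qbr c f x * x = - c *: (x * f * x).
  by rewrite /qbr mulrBl -scalerAl -(mulrA f) xx0 mulr0 sub0r scaleNr.
have xfx : x * qbr c f x = (- c)^-1 *: (qbr c f x * x).
  by rewrite l r scalerA mulVf ?oppr_eq0 // scale1r.
suff [s [z e]] : exists s z, (- c)^-1 = signed_qpow s z by exists s, z; rewrite xfx e.
case: qc => ->; [exists true, (-1) | exists true, 1]; rewrite /signed_qpow expr1 mulN1r invrN.
  by rewrite exprN1.
by rewrite invrK expr1z.
Qed.

Definition qbr_closed (P : A -> Prop) := forall c x y, P x -> P y -> P (qbr c x y).

Lemma qbr_closed_comm x : qbr_closed (GRing.comm x).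
Proof. by move=> c a b; exact: commr_qbr. Qed.

Lemma qbr_closed_qcommute x : qbr_closed (qcommute x).
Proof. by move=> c a b; exact: qcommute_qbr. Qed.

(* Each identity below is proved by writing [k *: (lhs - rhs)], for a nonzero
   scalar [k], as an explicit two-sided combination of the hypotheses (in the
   form [relation = 0]); [nc_ring] checks the combination in the free algebra. *)
Lemma eq_by_certificate k x y r : k != 0 -> k *: (x - y) = r -> r = 0 -> x = y.
Proof.
by move=> k0 <- /eqP; rewrite scaler_eq0 (negbTE k0) subr_eq0 => /eqP.
Qed.

Lemma commr_sub0 x y : GRing.comm x y -> x * y - y * x = 0.
Proof. by move->; rewrite subrr. Qed.

Lemma sqr_qbr_eq0 f x : x * x = 0 -> serre f x = 0 ->
  qbr qX^-1 f x * qbr qX^-1 f x = 0.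
Proof.
move=> xx0 fx0; apply: (eq_by_certificate qX_addV_neq0 (r :=
    qX ^- 2 *: ((x * x) * f * f) - serre f x * x - qX ^- 2 *: (x * serre f x)
    - (qX ^- 2 + 1) *: (f * (x * x) * f) + f * f * (x * x))).
  by rewrite /serre /qbr; nc_ring [:: x; f].
by rewrite xx0 fx0 !(mul0r, mulr0, scaler0, oppr0, addr0).
Qed.

Lemma commr_qbr_mul_sqr0 f y : y * y = 0 -> serre f y = 0 ->
  GRing.comm f (qbr qX y f * y).
Proof.
move=> yy0 fy0; apply: (eq_by_certificate qX_addV_neq0 (r :=
    - (y * y) * f * f - serre f y * y + y * serre f y + (1 + qX ^+ 2) *: (f * (y * y) * f)
    - qX ^+ 2 *: (f * f * (y * y)))).
  by rewrite /serre /qbr; nc_ring [:: y; f].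
by rewrite yy0 fy0 !(mul0r, mulr0, scaler0, oppr0, addr0).
Qed.

Lemma serre_qbrl c f a b : c = qX \/ c = qX^-1 -> serre f a = 0 -> GRing.comm f b ->
  serre f (qbr c a b) = 0.
Proof.
move=> qc fa0 /commr_sub0 fb0; case: qc => ->.
- apply: (eq_by_certificate (oner_neq0 Cq) (r :=
      serre f a * b - qX *: ((f * b - b * f) * f * a) + (1 + qX ^+ 2) *: ((f * b - b * f) * a * f)
      - qX *: (f * (f * b - b * f) * a) + (qX^-1 + qX) *: (f * a * (f * b - b * f))
      - a * (f * b - b * f) * f - a * f * (f * b - b * f) - qX *: (b * serre f a))).
    by rewrite /serre /qbr; nc_ring [:: f; a; b].
  by rewrite fa0 fb0 !(mul0r, mulr0, scaler0, oppr0, addr0).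
- apply: (eq_by_certificate (oner_neq0 Cq) (r :=
      serre f a * b - qX^-1 *: ((f * b - b * f) * f * a)
      + (qX ^- 2 + 1) *: ((f * b - b * f) * a * f) - qX^-1 *: (f * (f * b - b * f) * a)
      + (qX^-1 + qX) *: (f * a * (f * b - b * f)) - a * (f * b - b * f) * f
      - a * f * (f * b - b * f) - qX^-1 *: (b * serre f a))).
    by rewrite /serre /qbr; nc_ring [:: f; a; b].
  by rewrite fa0 fb0 !(mul0r, mulr0, scaler0, oppr0, addr0).
Qed.

Lemma serre_qbrr c f a b : c = qX \/ c = qX^-1 -> serre f b = 0 -> GRing.comm f a ->
  serre f (qbr c a b) = 0.
Proof.
move=> qc fb0 /commr_sub0 fa0; case: qc => ->.
- apply: (eq_by_certificate (oner_neq0 Cq) (r :=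
      - qX *: (serre f b * a) + (f * a - a * f) * f * b
      - (qX^-1 + qX) *: ((f * a - a * f) * b * f) + f * (f * a - a * f) * b
      - (1 + qX ^+ 2) *: (f * b * (f * a - a * f)) + a * serre f b
      + qX *: (b * (f * a - a * f) * f) + qX *: (b * f * (f * a - a * f)))).
    by rewrite /serre /qbr; nc_ring [:: f; a; b].
  by rewrite fa0 fb0 !(mul0r, mulr0, scaler0, oppr0, addr0).
- apply: (eq_by_certificate (oner_neq0 Cq) (r :=
      - qX^-1 *: (serre f b * a) + (f * a - a * f) * f * b
      - (qX^-1 + qX) *: ((f * a - a * f) * b * f) + f * (f * a - a * f) * b
      - (qX ^- 2 + 1) *: (f * b * (f * a - a * f)) + a * serre f b
      + qX^-1 *: (b * (f * a - a * f) * f) + qX^-1 *: (b * f * (f * a - a * f)))).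
    by rewrite /serre /qbr; nc_ring [:: f; a; b].
  by rewrite fa0 fb0 !(mul0r, mulr0, scaler0, oppr0, addr0).
Qed.

Lemma commr_qbr_chain d a b w : d = qX \/ d = qX^-1 ->
  GRing.comm a w -> serre b a = 0 -> serre b w = 0 ->
  GRing.comm b (qbr d w (qbr d b a)).
Proof.
move=> qd /commr_sub0 aw0 ba0 bw0; case: qd => ->.
- apply: (eq_by_certificate qX_addV_neq0 (r :=
      - qX ^+ 2 *: ((a * w - w * a) * b * b) - qX ^+ 2 *: (serre b a * w) - serre b w * a
      + qX ^+ 2 *: (a * serre b w) + (1 + qX ^+ 2) *: (b * (a * w - w * a) * b)
      - b * b * (a * w - w * a) + w * serre b a)).
    by rewrite /serre /qbr; nc_ring [:: a; b; w].
  by rewrite aw0 ba0 bw0 !(mul0r, mulr0, scaler0, oppr0, addr0).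
- apply: (eq_by_certificate qX_addV_neq0 (r :=
      - qX ^- 2 *: ((a * w - w * a) * b * b) - qX ^- 2 *: (serre b a * w) - serre b w * a
      + qX ^- 2 *: (a * serre b w) + (qX ^- 2 + 1) *: (b * (a * w - w * a) * b)
      - b * b * (a * w - w * a) + w * serre b a)).
    by rewrite /serre /qbr; nc_ring [:: a; b; w].
  by rewrite aw0 ba0 bw0 !(mul0r, mulr0, scaler0, oppr0, addr0).
Qed.

End QBracket.

Section AntiCommute.
Variable A : algType Cq.
Implicit Types (a b f g p r w x y : A).

Definition anticomm x y := x * y + y * x.

Definition anticomm_mod y b a := exists w, anticomm b a = w * y.

Lemma qcommute_anticomm0 x y : anticomm x y = 0 -> qcommute x y.
Proof.
move/eqP; rewrite addr_eq0 => /eqP xy; exists true, 0.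
by rewrite xy /signed_qpow expr1 expr0z mulr1 scaleN1r.
Qed.

Lemma anticomm_mod_qbr y b a f : anticomm_mod y b a -> GRing.comm b f -> GRing.comm y f ->
  anticomm_mod y b (qbr qX a f).
Proof.
case=> w ba /commr_sub0 bf0 /commr_sub0 yf0; exists (qbr qX w f).
apply: (eq_by_certificate (oner_neq0 Cq) (r :=
    - qX *: ((b * f - f * b) * a) + (anticomm b a - w * y) * f - a * (b * f - f * b)
    - qX *: (f * (anticomm b a - w * y)) + w * (y * f - f * y))).
  by rewrite /anticomm /qbr; nc_ring [:: b; a; f; w; y].
by rewrite bf0 yf0 ba subrr !(mul0r, mulr0, scaler0, oppr0, addr0).
Qed.

Lemma anticomm_mod_qbr_sqr0 y p g : y * y = 0 ->
  anticomm (qbr qX^-1 p (qbr qX y g)) y = 0 -> anticomm_mod y (qbr qX^-1 p y) (qbr qX y g).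
Proof.
move=> yy0 acz.
exists ((qX^-1 - qX) *: (p * y * g + g * y * p) + (1 - qX ^- 2) *: (y * g * p)).
apply: (eq_by_certificate (oner_neq0 Cq) (r :=
    - qX ^- 2 *: ((y * y) * g * p) - qX^-1 *: (anticomm (qbr qX^-1 p (qbr qX y g)) y)
    + p * (y * y) * g - p * g * (y * y) + g * (y * y) * p)).
  by rewrite /anticomm /qbr; nc_ring [:: y; p; g].
by rewrite yy0 acz !(mul0r, mulr0, scaler0, oppr0, addr0).
Qed.

(* With y = F_{m,t}, p = F_t, r = F_{t+1} and g = F_{m-1}, this transports
   {F_{m-1,t+1}, F_{m,t}} = 0 to {F_{m-1,t+2}, F_{m,t+1}} = 0. *)
Lemma anticomm_qbr_step y p r g : y * y = 0 ->
  GRing.comm g p -> GRing.comm g r -> GRing.comm r y ->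
  serre p r = 0 -> serre p y = 0 ->
  anticomm (qbr qX^-1 p (qbr qX y g)) y = 0 ->
  anticomm (qbr qX^-1 r (qbr qX^-1 p (qbr qX y g))) (qbr qX^-1 p y) = 0.
Proof.
move=> yy0 /commr_sub0 gp0 /commr_sub0 gr0 /commr_sub0 ry0 pr0 py0.
set z := qbr qX^-1 p (qbr qX y g) => acz.
apply: (eq_by_certificate qX_addV_neq0 (r :=
    (- qX ^- 3 + qX^-1) *: ((y * y) * p * p * r * g)
    - (qX ^- 3 + qX^-1) *: ((y * y) * g * p * p * r)
    + (qX ^- 4 + qX ^- 2) *: ((y * y) * g * p * r * p)
    - qX^-1 *: ((g * r - r * g) * y * p * p * y) - qX^-1 *: ((r * y - y * r) * y * p * p * g)
    + (qX ^- 2 + 1) *: ((r * y - y * r) * p * y * p * g)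
    - qX ^- 2 *: ((r * y - y * r) * p * p * g * y)
    - (qX^-1 + qX) *: ((r * y - y * r) * p * g * y * p)
    + (qX ^- 2 + 1) *: ((r * y - y * r) * g * y * p * p) + serre p r * y * g * y
    + qX^-1 *: (serre p y * y * r * g) - serre p y * r * g * y
    - (qX ^- 2 + 1) *: (anticomm z y * p * r)
    + (qX ^- 3 + qX^-1) *: (anticomm z y * r * p)
    + (- qX ^- 3 + qX) *: (y * (g * p - p * g) * y * p * r)
    + (qX ^- 4 + qX ^- 2) *: (y * (g * p - p * g) * y * r * p) - y * (g * p - p * g) * p * y * r
    - (qX ^- 4 + qX ^- 2) *: (y * (g * p - p * g) * r * y * p)
    + (qX ^- 3 + qX^-1) *: (y * (g * p - p * g) * r * p * y)
    - qX ^- 2 *: (y * (g * r - r * g) * y * p * p) + qX^-1 *: (y * serre p r * y * g)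
    - (qX ^- 2 + 1) *: (y * serre p r * g * y) + (qX ^- 3 - qX^-1) *: (y * serre p y * r * g)
    - y * p * (g * p - p * g) * y * r + (qX ^- 2 + 1) *: (y * p * (g * r - r * g) * y * p)
    + (qX ^- 3 + qX^-1) *: (y * p * (g * r - r * g) * p * y)
    + (qX ^- 3 + qX^-1) *: (y * p * (r * y - y * r) * p * g)
    + (- qX ^- 4 + 1) *: (y * p * y * (g * p - p * g) * r)
    - (qX ^- 3 + qX^-1) *: (y * p * y * (g * r - r * g) * p)
    + (- qX ^- 4 + 1) *: (y * p * y * p * (g * r - r * g))
    - (qX ^- 3 + qX^-1) *: (y * p * y * r * (g * p - p * g))
    - (qX ^- 2 + (1 + 1)) *: (y * p * p * (g * r - r * g) * y)
    - qX^-1 *: (y * p * p * (r * y - y * r) * g)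
    + (qX ^- 3 + qX^-1) *: (y * p * p * y * (g * r - r * g))
    + (qX ^- 2 + (1 + 1)) *: (y * p * p * g * (r * y - y * r))
    + (qX ^- 3 + qX^-1) *: (y * p * r * (g * p - p * g) * y)
    + (qX ^- 3 + qX^-1) *: (y * p * r * y * (g * p - p * g))
    - (qX ^- 4 + (1 + 1) * qX ^- 2 + 1) *: (y * p * g * (r * y - y * r) * p)
    + (qX^-1 + qX) *: (y * r * (g * p - p * g) * y * p) - y * r * (g * p - p * g) * p * y
    - qX^-1 *: (y * r * serre p y * g) - y * r * p * (g * p - p * g) * y + y * r * g * serre p y
    + qX ^- 2 *: (y * g * (r * y - y * r) * p * p) + y * g * serre p y * r
    + qX ^- 2 *: (y * g * y * serre p r) + (qX ^- 3 + qX^-1) *: (p * (y * y) * g * p * r)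
    + (qX^-1 + qX) *: (p * (g * r - r * g) * y * p * y)
    + (qX ^- 2 + 1) *: (p * (r * y - y * r) * y * p * g)
    - (qX^-1 + qX) *: (p * (r * y - y * r) * p * y * g)
    + (qX ^- 2 + (1 + 1) + qX ^+ 2) *: (p * (r * y - y * r) * p * g * y)
    - (qX^-1 + qX) *: (p * (r * y - y * r) * g * y * p)
    - (qX ^- 2 + 1) *: (p * y * (g * r - r * g) * p * y)
    + (qX^-1 + qX) *: (p * y * p * (g * r - r * g) * y)
    - (qX ^- 2 + 1) *: (p * y * p * y * (g * r - r * g))
    - (qX^-1 + qX) *: (p * y * p * g * (r * y - y * r))
    - (qX ^- 2 + 1) *: (p * y * r * (g * p - p * g) * y)
    - (qX ^- 2 + 1) *: (p * y * r * y * (g * p - p * g))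
    + (qX ^- 3 + qX^-1) *: (p * y * g * (r * y - y * r) * p)
    - qX^-1 *: (p * p * (y * y) * r * g) - p * p * (r * y - y * r) * g * y
    - (qX ^- 2 + 1) *: (p * r * (y * y) * p * g) + (qX ^- 2 + 1) *: (p * r * (y * y) * g * p)
    + (qX^-1 + qX) *: (p * r * anticomm z y)
    + (qX ^- 2 + 1) *: (p * r * y * (g * p - p * g) * y)
    + (1 + qX ^+ 2) *: (p * r * p * g * (y * y)) - (qX^-1 + qX) *: (p * g * (y * y) * p * r)
    + (qX ^- 2 + 1) *: (p * g * (y * y) * r * p)
    + (qX ^- 2 + 1) *: (p * g * (r * y - y * r) * y * p)
    - (qX^-1 + qX) *: (p * g * (r * y - y * r) * p * y)
    - (qX ^- 2 + 1) *: (p * g * r * (y * y) * p) + qX^-1 *: (r * (y * y) * p * p * g)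
    - (qX ^- 3 + qX^-1) *: (r * (y * y) * g * p * p)
    + (1 + qX ^+ 2) *: (r * (g * p - p * g) * y * p * y) - r * serre p y * g * y
    - (qX ^- 2 + 1) *: (r * anticomm z y * p)
    - (qX ^- 2 + 1) *: (r * y * (g * p - p * g) * p * y)
    - (qX ^- 2 + 1) *: (r * y * p * (g * p - p * g) * y)
    + (qX ^- 2 + 1) *: (r * y * p * y * (g * p - p * g))
    + (qX^-1 + qX) *: (r * p * y * (g * p - p * g) * y) + qX *: (r * g * serre p y * y)
    - qX *: (r * g * p * p * (y * y)) + qX^-1 *: (g * (y * y) * p * p * r)
    + qX^-1 *: (g * (r * y - y * r) * p * p * y) + qX^-1 *: (g * y * serre p r * y)
    - qX^-1 *: (g * y * serre p y * r) + (qX ^- 3 + qX^-1) *: (g * y * p * (r * y - y * r) * p)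
    - qX^-1 *: (g * y * p * p * (r * y - y * r)))).
  by rewrite /z /anticomm /serre /qbr; nc_ring [:: y; p; r; g].
by rewrite yy0 gp0 gr0 ry0 pr0 py0 acz !(mul0r, mulr0, scaler0, oppr0, addr0).
Qed.

Lemma anticomm_mod_prod (I : eqType) (s : seq I) (G : I -> A) y b : y * y = 0 ->
  (forall i, i \in s -> anticomm_mod y b (G i) /\ qcommute y (G i)) ->
  b * (\prod_(i <- s) G i * y) = (-1) ^+ size s *: (\prod_(i <- s) G i * (b * y)).
Proof.
move=> yy0; elim: s => [|i s IH] hs; first by rewrite !big_nil !mul1r scale1r.
have [[w bGi] yGi] := hs i (mem_head i s).
have {}IH := IH (fun j js => hs j (mem_behead (js : j \in behead (i :: s)))).
(* The error term [w * y] of [b * G i] is killed by [y * \prod_(j <- s) G j * y = 0]. *)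
have ysy : y * \prod_(j <- s) G j * y = 0.
  have [sg [z ->]] : qcommute y (\prod_(j <- s) G j).
    by apply: qcommute_prod => j js _; case: (hs j (mem_behead (js : j \in behead (i :: s)))).
  by rewrite -scalerAl -mulrA yy0 mulr0 scaler0.
have bGi' : b * G i = - (G i * b) + w * y by rewrite -bGi /anticomm addrC addrK.
rewrite !big_cons -!mulrA [b * _]mulrA bGi' mulrDl mulNr -(mulrA (G i)) IH.
by rewrite -(mulrA w) (mulrA y) ysy mulr0 addr0 -scalerAr exprS mulN1r scaleNr.
Qed.

End AntiCommute.

Lemma nat_down_ind (P : nat -> Prop) (m : nat) :
  P m -> (forall s, (s < m)%N -> P s.+1 -> P s) -> forall s, (s <= m)%N -> P s.
Proof.
move=> Pm IH s sm; rewrite -(subKn sm).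
elim: (m - s)%N (leq_subr s m) => [|d IHd] dm; first by rewrite subn0.
apply: IH; first lia.
by rewrite (_ : (m - d.+1).+1 = m - d)%N; [apply: IHd; lia | lia].
Qed.

Lemma iota_split a n i : (a <= i < a + n)%N ->
  iota a n = iota a (i - a) ++ i :: iota i.+1 (a + n - i.+1).
Proof.
move=> ai; rewrite -[in LHS](_ : (i - a + (1 + (a + n - i.+1)) = n)%N); last lia.
by rewrite iotaD [(1 + _)%N]add1n /= (_ : (a + (i - a) = i)%N) //; lia.
Qed.

Section IotaProducts.
Variable R : pzSemiRingType.

Lemma prod_seq_condT (I : eqType) (r : seq I) (P : pred I) (G : I -> R) :
  {in r, forall i, P i} -> \prod_(i <- r | P i) G i = \prod_(i <- r) G i.
Proof.
by move=> rP; rewrite big_seq_cond [RHS]big_seq; apply: eq_bigl => i; apply: andb_idr => /rP.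
Qed.

Lemma prod_seq_condF (I : eqType) (r : seq I) (P : pred I) (G : I -> R) :
  {in r, forall i, ~~ P i} -> \prod_(i <- r | P i) G i = 1.
Proof. by move=> rP; apply: big1_seq => i /andP [Pi /rP]; rewrite Pi. Qed.

Lemma prod_iota_le (G : nat -> R) m i : (1 <= i <= m)%N ->
  \prod_(a <- iota 1 m | (a <= i)%N) G a = \prod_(a <- iota 1 m | (a < i)%N) G a * G i.
Proof.
move=> im; rewrite (@iota_split 1 m i) ?big_cat ?big_cons ?leqnn ?ltnn /=; try lia.
rewrite [X in G i * X]prod_seq_condF => [|a]; last by rewrite mem_iota; lia.
rewrite [X in _ * X * G i]prod_seq_condF => [|a]; last by rewrite mem_iota; lia.
by rewrite !prod_seq_condT ?mulr1 // => a; rewrite mem_iota; lia.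
Qed.

Lemma prod_iota_ge (G : nat -> R) m i : (1 <= i <= m)%N ->
  \prod_(a <- iota 1 m | (i <= a)%N) G a = G i * \prod_(a <- iota 1 m | (i < a)%N) G a.
Proof.
move=> im; rewrite (@iota_split 1 m i) ?big_cat ?big_cons ?leqnn ?ltnn /=; try lia.
rewrite [X in X * _ = _]prod_seq_condF => [|a]; last by rewrite mem_iota; lia.
rewrite [X in _ = _ * (X * _)]prod_seq_condF => [|a]; last by rewrite mem_iota; lia.
by rewrite !prod_seq_condT ?mul1r // => a; rewrite mem_iota; lia.
Qed.

End IotaProducts.

Section RootVectors.
Variables (m n : nat) (A : algType Cq) (F : nat -> A).
Local Notation N := (m + n)%N.
Local Notation Fr a b := (Fij m qX F a b).
Local Notation q_ c := (qi m qX c).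

Lemma qi_le c : (c <= m)%N -> q_ c = qX.
Proof. by rewrite /qi => ->. Qed.

Lemma qi_gt c : (m < c)%N -> q_ c = qX^-1.
Proof. by move=> mc; rewrite /qi leqNgt mc. Qed.

Lemma qi_cases c : q_ c = qX \/ q_ c = qX^-1.
Proof. by rewrite /qi; case: ifP; [left | right]. Qed.

Lemma Fr_succ a : Fr a a.+1 = F a.
Proof. by rewrite /Fij subSn // subnn. Qed.

Lemma FrS a b : (a < b)%N -> Fr a b.+1 = qbr (q_ b) (F b) (Fr a b).
Proof.
move=> ab; have [k ->] : exists k, b = (a + k.+1)%N by exists (b - a.+1)%N; lia.
have e1 : ((a + k.+1).+1 - a = k.+2)%N by lia.
have e2 : (a + k.+1 - a = k.+1)%N by lia.
by rewrite /Fij e1 e2 /= /qbr addnS addrC.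
Qed.

Lemma Fr_extend (P : A -> Prop) a b j : qbr_closed P -> (a < b <= j)%N ->
  P (Fr a b) -> (forall k, (b <= k < j)%N -> P (F k)) -> P (Fr a j).
Proof.
move=> clP /andP [ab]; elim: j => [|j IHj] bj Pab PF; first lia.
have [<-|bj'] := eqVneq b j.+1; first by [].
rewrite FrS; last lia.
apply: clP; first by apply: PF; lia.
by apply: (IHj _ Pab) => [|k hk]; [lia | apply: PF; lia].
Qed.

Lemma Fr_gen (P : A -> Prop) a b : qbr_closed P -> (a < b)%N ->
  (forall k, (a <= k < b)%N -> P (F k)) -> P (Fr a b).
Proof.
move=> clP ab PF; apply: (Fr_extend (b := a.+1)) => //; first lia.
  by rewrite Fr_succ; apply: PF; lia.
by move=> k hk; apply: PF; lia.
Qed.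

Definition Fcol t := \prod_(a <- iota 1 m) Fr a t.

Lemma Fcol_split k t : (1 <= k <= m)%N ->
  Fcol t = \prod_(a <- iota 1 (k - 1)) Fr a t * (Fr k t * \prod_(a <- iota k.+1 (m - k)) Fr a t).
Proof.
move=> km; have e : (1 + m - k.+1 = m - k)%N by lia.
by rewrite /Fcol (@iota_split 1 m k) ?e ?big_cat ?big_cons //; lia.
Qed.

Definition cols_after j := \prod_(b <- rev (iota j.+1 (N - j))) Fcol b.

Definition cols_before j := \prod_(b <- rev (iota m.+1 (j - m.+1))) Fcol b.

Lemma FI_cut (P : pred (nat * nat)) j (L R : bool) (Q : pred nat) : (m < j <= N)%N ->
  (forall a b, (j < b)%N -> P (a, b) = L) -> (forall a b, (b < j)%N -> P (a, b) = R) ->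
  (forall a, P (a, j) = Q a) ->
  FI m n qX F P = (if L then cols_after j else 1) *
    (\prod_(a <- iota 1 m | Q a) Fr a j * (if R then cols_before j else 1)).
Proof.
move=> mj PL PR PQ.
have cols s B : (forall b, b \in s -> forall a, P (a, b) = B) ->
    \prod_(b <- s) \prod_(a <- iota 1 m | P (a, b)) Fr a b = if B then \prod_(b <- s) Fcol b else 1.
  move=> sB; rewrite big_seq; under eq_bigr => b bs do rewrite (eq_bigl _ _ (sB b bs)).
  by case: B {sB} => /=; [rewrite -big_seq | rewrite big1 // => b _; rewrite big_pred0].
have e : (m.+1 + n - j.+1 = N - j)%N by lia.
rewrite /FI /I1seq big_flatten /= big_map.
under eq_bigr => b _ do rewrite big_map.
rewrite (@iota_split m.+1 n j) ?e ?rev_cat ?rev_cons ?cat_rcons ?big_cat ?big_cons; try lia.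
rewrite (eq_bigl _ _ PQ) (cols _ L) ?(cols _ R) //.
- by move=> b; rewrite mem_rev mem_iota => hb a; apply: PR; lia.
- by move=> b; rewrite mem_rev mem_iota => hb a; apply: PL; lia.
Qed.

Lemma F_ltE i j : (1 <= i <= m)%N -> (m < j <= N)%N ->
  F_lt m n qX F (i, j) = cols_after j * \prod_(a <- iota 1 m | (a < i)%N) Fr a j.
Proof.
move=> im mj; rewrite /F_lt (@FI_cut _ j true false (fun a => a < i)%N) ?mulr1 //;
  [move=> a b jb | move=> a b bj | move=> a]; rewrite /precI1 /=; lia.
Qed.

Lemma F_leE i j : (1 <= i <= m)%N -> (m < j <= N)%N ->
  F_le m n qX F (i, j) = F_lt m n qX F (i, j) * Fr i j.
Proof.
move=> im mj; rewrite F_ltE // -mulrA -(prod_iota_le (fun a => Fr a j)) //.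
rewrite /F_le (@FI_cut _ j true false (fun a => a <= i)%N) ?mulr1 //;
  [move=> a b jb | move=> a b bj | move=> a]; rewrite /precI1 /= xpair_eqE; lia.
Qed.

Lemma F_gtE i j : (1 <= i <= m)%N -> (m < j <= N)%N ->
  F_gt m n qX F (i, j) = \prod_(a <- iota 1 m | (i < a)%N) Fr a j * cols_before j.
Proof.
move=> im mj; rewrite /F_gt (@FI_cut _ j false true (fun a => i < a)%N) ?mul1r //;
  [move=> a b jb | move=> a b bj | move=> a]; rewrite /precI1 /=; lia.
Qed.

Lemma F_geE i j : (1 <= i <= m)%N -> (m < j <= N)%N ->
  F_ge m n qX F (i, j) = Fr i j * F_gt m n qX F (i, j).
Proof.
move=> im mj; rewrite F_gtE // mulrA -(prod_iota_ge (fun a => Fr a j)) //.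
rewrite /F_ge (@FI_cut _ j false true (fun a => i <= a)%N) ?mul1r //;
  [move=> a b jb | move=> a b bj | move=> a]; rewrite /precI1 /= xpair_eqE; lia.
Qed.

Hypothesis F_comm : forall i j, (1 <= i < N)%N -> (1 <= j < N)%N ->
  (i.+1 < j)%N || (j.+1 < i)%N -> GRing.comm (F i) (F j).

Lemma commr_F_Fr k a b : (1 <= a < b)%N -> (b <= N)%N -> (1 <= k < N)%N ->
  (k.+1 < a)%N || (b < k)%N -> GRing.comm (F k) (Fr a b).
Proof.
move=> ab bN kN far; apply: Fr_gen; [exact: qbr_closed_comm | lia |].
by move=> k' hk'; apply: F_comm; lia.
Qed.

Lemma Fr_split a c b : (1 <= a < c)%N -> (c < b <= N)%N ->
  Fr a b = qbr (q_ c) (Fr c b) (Fr a c).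
Proof.
move=> ac; elim: b => [|b IH] cb; first lia.
have [<-|cb'] := eqVneq c b; first by rewrite FrS ?Fr_succ //; lia.
rewrite FrS; last lia.
rewrite IH; last lia.
by rewrite qbrA -?FrS //; [lia | apply: commr_F_Fr; lia].
Qed.

Lemma Fr_first a b : (1 <= a)%N -> (a.+1 < b <= N)%N ->
  Fr a b = qbr (q_ a.+1) (Fr a.+1 b) (F a).
Proof. by move=> a1 ab; rewrite (@Fr_split a a.+1 b) ?Fr_succ //; lia. Qed.

Lemma Fr_extend_down (P : A -> Prop) a c t : qbr_closed P -> (1 <= a <= c)%N ->
  (c < t <= N)%N -> P (Fr c t) -> (forall k, (a <= k < c)%N -> P (F k)) -> P (Fr a t).
Proof.
move=> clP ac ct Pc PF.
suff /(_ a) : forall s, (s <= c)%N -> (a <= s)%N -> P (Fr s t) by apply; lia.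
apply: nat_down_ind => [//|s sc IH as_].
rewrite Fr_first; [|lia|lia].
by apply: clP; [apply: IH | apply: PF]; lia.
Qed.

Lemma commr_F_Fcol k t : (m < t < k)%N -> (k < N)%N -> GRing.comm (F k) (Fcol t).
Proof.
move=> tk kN; rewrite /Fcol big_seq; apply: commr_prod => a; rewrite mem_iota => ha.
by apply: commr_F_Fr; lia.
Qed.

Hypothesis F_serre : forall i j, (1 <= i < N)%N -> (1 <= j < N)%N ->
  (i.+1 == j) || (j.+1 == i) -> i != m -> serre (F i) (F j) = 0.

Lemma serre_F_Fr_last a b : (1 <= a < b)%N -> (b < N)%N -> b != m -> serre (F b) (Fr a b) = 0.
Proof.
move=> ab bN bm; case: b ab bN bm => [|b] ab bN bm; first lia.
have [->|ab'] := eqVneq a b; first by rewrite Fr_succ; apply: F_serre; lia.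
rewrite FrS; last lia.
apply: serre_qbrl; [exact: qi_cases | apply: F_serre; lia | apply: commr_F_Fr; lia].
Qed.

Lemma serre_F_Fr_first a b : (1 <= a)%N -> (a.+1 < b <= N)%N -> a != m ->
  serre (F a) (Fr a.+1 b) = 0.
Proof.
move=> a1 ab am; have [e|ab'] := eqVneq a.+2 b.
  by subst b; rewrite Fr_succ; apply: F_serre; lia.
rewrite (@Fr_split a.+1 a.+2 b) ?Fr_succ; [|lia|lia].
apply: serre_qbrr; [exact: qi_cases | apply: F_serre; lia | apply: commr_F_Fr; lia].
Qed.

Lemma commr_F_Fr_inner k s t : k != m -> (1 <= s < k)%N -> (k.+1 < t <= N)%N ->
  GRing.comm (F k) (Fr s t).
Proof.
case: k => [|k] km sk kt; first lia.
have base : GRing.comm (F k.+1) (Fr k k.+3).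
  rewrite (@FrS k k.+2) ?(@FrS k k.+1) ?Fr_succ; try lia.
  have -> : q_ k.+2 = q_ k.+1.
    by rewrite /qi; case: (leqP k.+2 m); case: (leqP k.+1 m) => //; lia.
  by apply: commr_qbr_chain; [exact: qi_cases | apply: F_comm | apply: F_serre ..]; lia.
apply: (@Fr_extend_down _ s k); [exact: qbr_closed_comm | lia | lia | |].
  apply: (@Fr_extend _ k k.+3) => //; [exact: qbr_closed_comm | lia |].
  by move=> j hj; apply: F_comm; lia.
by move=> j hj; apply: F_comm; lia.
Qed.

Hypothesis F_sqr0 : F m * F m = 0.

Lemma sqr_Fr_eq0 s t : (1 <= s <= m)%N -> (m < t <= N)%N -> Fr s t * Fr s t = 0.
Proof.
move=> sm mt.
have top u : (m < u <= N)%N -> Fr m u * Fr m u = 0.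
  elim: u => [|u IH] mu; first lia.
  have [<-|mu'] := eqVneq m u; first by rewrite Fr_succ.
  rewrite FrS ?qi_gt; [|lia|lia].
  by apply: sqr_qbr_eq0; [apply: IH | apply: serre_F_Fr_last]; lia.
suff /(_ s) : forall s, (s <= m)%N -> (1 <= s)%N -> Fr s t * Fr s t = 0 by apply; lia.
apply: nat_down_ind => [_|u um IH u1]; first exact: top.
rewrite Fr_first ?qi_le; [|lia|lia|lia].
rewrite (qbr_flip _ _ indet_neq0) -scalerAl -scalerAr.
by rewrite sqr_qbr_eq0 ?scaler0 //; [apply: IH | apply: serre_F_Fr_first]; lia.
Qed.

Lemma qcommute_Fr_col a b t : (1 <= a < b)%N -> (b <= m < t)%N -> (t <= N)%N ->
  qcommute (Fr b t) (Fr a t).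
Proof.
move=> ab bm tN; apply: (@Fr_extend_down _ a b.-1); [exact: qbr_closed_qcommute|lia|lia| |].
  have bb : b.-1.+1 = b by lia.
  rewrite (@Fr_first b.-1 t) ?bb ?qi_le; try lia.
  rewrite (qbr_flip _ _ indet_neq0).
  by apply/qcommuteZ/qcommute_qbr_sqr0; [apply: sqr_Fr_eq0; lia | right].
by move=> k hk; apply/commr_qcommute/commr_sym/commr_F_Fr; lia.
Qed.

Lemma qcommute_Fr_row s a b : (1 <= s <= m)%N -> (m < a < b)%N -> (b <= N)%N ->
  qcommute (Fr s a) (Fr s b).
Proof.
move=> sm ab bN; apply: (@Fr_extend _ s a.+1); [exact: qbr_closed_qcommute|lia| |].
  rewrite FrS ?qi_gt; [|lia|lia].
  by apply: qcommute_qbr_sqr0; [apply: sqr_Fr_eq0; lia | right].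
by move=> k hk; apply/commr_qcommute/commr_sym/commr_F_Fr; lia.
Qed.

Lemma commr_F_Fr_pair k t : (1 <= k < m)%N -> (m < t <= N)%N ->
  GRing.comm (F k) (Fr k t * Fr k.+1 t).
Proof.
move=> km mt; rewrite (@Fr_first k t) ?qi_le; try lia.
by apply: commr_qbr_mul_sqr0; [apply: sqr_Fr_eq0 | apply: serre_F_Fr_first]; lia.
Qed.

Hypothesis F_anticomm : (2 <= m)%N -> (2 <= n)%N -> anticomm (Fr m.-1 m.+2) (F m) = 0.

Lemma qcommute_Fm_Fr s t : (1 <= s < m)%N -> (m.+2 <= t <= N)%N -> qcommute (F m) (Fr s t).
Proof.
move=> sm mt; apply: (@Fr_extend_down _ s m.-1); [exact: qbr_closed_qcommute|lia|lia| |].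
  apply: (@Fr_extend _ m.-1 m.+2); [exact: qbr_closed_qcommute|lia| |].
    by apply/qcommute_sym/qcommute_anticomm0/F_anticomm; lia.
  by move=> k hk; apply/commr_qcommute/F_comm; lia.
by move=> k hk; apply/commr_qcommute/F_comm; lia.
Qed.

Lemma qcommute_F_Fcol k t : (1 <= k)%N -> (m < t)%N -> (k.+2 <= t <= N)%N ->
  qcommute (F k) (Fcol t).
Proof.
move=> k1 mt kt; case: (ltngtP k m) => [km|mk|km].
- have e : (m - k = (m - k.+1).+1)%N by lia.
  rewrite (@Fcol_split k t) ?e /= ?big_cons ?(mulrA (Fr k t)); try lia.
  apply: qcommuteM; last apply: qcommuteM.
  + by apply: qcommute_prod => a; rewrite mem_iota => ha _;
      apply/commr_qcommute/commr_F_Fr_inner; lia.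
  + by apply/commr_qcommute/commr_F_Fr_pair; lia.
  + by apply: qcommute_prod => a; rewrite mem_iota => ha _;
      apply/commr_qcommute/commr_F_Fr; lia.
- by apply: qcommute_prod => a; rewrite mem_iota => ha _;
    apply/commr_qcommute/commr_F_Fr_inner; lia.
- subst k; rewrite (@Fcol_split m t) ?subnn ?big_nil ?mulr1; try lia.
  apply: qcommuteM.
    by apply: qcommute_prod => a; rewrite mem_iota => ha _; apply: qcommute_Fm_Fr; lia.
  by rewrite -Fr_succ; apply: qcommute_Fr_row; lia.
Qed.

Lemma anticomm_Fr_cross t : (2 <= m)%N -> (m < t < N)%N ->
  anticomm (Fr m.-1 t.+1) (Fr m t) = 0.
Proof.
move=> m2; elim: t => [|t IH] mt; first lia.
have [e|mt'] := eqVneq t m; first by subst t; rewrite Fr_succ; apply: F_anticomm; lia.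
have mm : m.-1.+1 = m by lia.
have vert : Fr m.-1 t = qbr qX (Fr m t) (F m.-1).
  by rewrite (@Fr_first m.-1 t) ?mm ?(@qi_le m) //; lia.
have {IH} := IH ltac:(lia).
rewrite (@FrS m.-1 t.+1) ?(@FrS m.-1 t) ?(@FrS m t) ?(@qi_gt t.+1) ?(@qi_gt t) ?vert; try lia.
apply: anticomm_qbr_step; first by apply: sqr_Fr_eq0; lia.
- by apply: F_comm; lia.
- by apply: F_comm; lia.
- by apply: commr_F_Fr; lia.
- by apply: F_serre; lia.
- by apply: serre_F_Fr_last; lia.
Qed.

Lemma anticomm_mod_Fr s t : (1 <= s < m)%N -> (m < t < N)%N ->
  anticomm_mod (Fr m t) (Fr m t.+1) (Fr s t).
Proof.
move=> sm mt; have mm : m.-1.+1 = m by lia.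
suff /(_ s) : forall u, (u <= m.-1)%N -> (1 <= u)%N ->
    anticomm_mod (Fr m t) (Fr m t.+1) (Fr u t) by apply; lia.
apply: nat_down_ind => [_|u um IH u1].
  rewrite (@FrS m t) ?(@Fr_first m.-1 t) ?mm ?(@qi_le m) ?(@qi_gt t); try lia.
  apply: anticomm_mod_qbr_sqr0; first by apply: sqr_Fr_eq0; lia.
  have := @anticomm_Fr_cross t.
  rewrite (@FrS m.-1 t) ?(@Fr_first m.-1 t) ?mm ?(@qi_le m) ?(@qi_gt t); try lia.
  by apply; lia.
rewrite (@Fr_first u t) ?(@qi_le u.+1); try lia.
apply: anticomm_mod_qbr; first by apply: IH; lia.
  by apply/commr_sym/commr_F_Fr; lia.
by apply/commr_sym/commr_F_Fr; lia.
Qed.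

Lemma qcommute_Fr_Fcol_next t : (1 <= m < t)%N -> (t < N)%N ->
  qcommute (Fr m t.+1) (Fcol t).
Proof.
move=> mt tN; rewrite (@Fcol_split m t) ?subnn ?big_nil ?mulr1; try lia.
have [s [z BY]] : qcommute (Fr m t.+1) (Fr m t) by apply/qcommute_sym/qcommute_Fr_row; lia.
exists (odd (size (iota 1 (m - 1))) (+) s), z.
rewrite (anticomm_mod_prod (s := iota 1 (m - 1)%N) (G := fun a => Fr a t)).
- by rewrite BY -scalerAr scalerA signr_signed_qpow !mulrA.
- by apply: sqr_Fr_eq0; lia.
move=> a; rewrite mem_iota => ha; split; first by apply: anticomm_mod_Fr; lia.
by apply: qcommute_Fr_col; lia.
Qed.

Lemma qcommute_Fcol_Fr_gt i j t : (1 <= i <= m)%N -> (m < j < t)%N -> (t <= N)%N ->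
  qcommute (Fcol t) (Fr i j).
Proof.
move=> im jt tN; apply: Fr_gen; [exact: qbr_closed_qcommute | lia |].
by move=> k hk; apply/qcommute_sym/qcommute_F_Fcol; lia.
Qed.

Lemma qcommute_Fcol_Fr_lt i j t : (1 <= i <= m)%N -> (m < t < j)%N -> (j <= N)%N ->
  qcommute (Fcol t) (Fr i j).
Proof.
move=> im tj jN; apply: (@Fr_extend _ i t.+1); [exact: qbr_closed_qcommute | lia | |].
  apply: (@Fr_extend_down _ i m); [exact: qbr_closed_qcommute | lia | lia | |].
    by apply/qcommute_sym/qcommute_Fr_Fcol_next; lia.
  by move=> k hk; apply/qcommute_sym/qcommute_F_Fcol; lia.
by move=> k hk; apply/commr_qcommute/commr_sym/commr_F_Fcol; lia.
Qed.

Lemma qcommute_Fr_F_lt i j : (1 <= i <= m)%N -> (m < j <= N)%N ->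
  qcommute (Fr i j) (F_lt m n qX F (i, j)).
Proof.
move=> im mj; rewrite F_ltE //; apply: qcommuteM.
  apply: qcommute_prod => b; rewrite mem_rev mem_iota => hb _.
  by apply/qcommute_sym/qcommute_Fcol_Fr_gt; lia.
by apply: qcommute_prod => a; rewrite mem_iota => ha ai; apply: qcommute_Fr_col; lia.
Qed.

Lemma qcommute_Fr_F_gt i j : (1 <= i <= m)%N -> (m < j <= N)%N ->
  qcommute (Fr i j) (F_gt m n qX F (i, j)).
Proof.
move=> im mj; rewrite F_gtE //; apply: qcommuteM.
  apply: qcommute_prod => a; rewrite mem_iota => ha ia.
  by apply/qcommute_sym/qcommute_Fr_col; lia.
apply: qcommute_prod => b; rewrite mem_rev mem_iota => hb _.
by apply/qcommute_sym/qcommute_Fcol_Fr_lt; lia.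
Qed.

End RootVectors.

Theorem proposition5p4 (m n : nat) (hm : (1 <= m)%N) (hn : (1 <= n)%N)
  (A : algType Cq) (Kp Km E F : nat -> A)
  (rels : Uq_rels m n qX Kp Km E F)
  (i j : nat) (hi : (1 <= i <= m)%N) (hj : (m < j <= m + n)%N) :
  exists (z1 z2 : int) (s1 s2 : bool),
    Fij m qX F i j * F_lt m n qX F (i, j)
      = ((-1) ^+ s1 * qX ^ z1) *: F_le m n qX F (i, j)
  /\ F_gt m n qX F (i, j) * Fij m qX F i j
      = ((-1) ^+ s2 * qX ^ z2) *: F_ge m n qX F (i, j).
Proof.
have F_anticomm : (2 <= m)%N -> (2 <= n)%N -> anticomm (Fij m qX F m.-1 m.+2) (F m) = 0.
  by move=> m2 n2; have := F_extra rels m2 n2; rewrite /sbr /= expr1 mulN1r opprK.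
have [s1 [z1 lt]] :=
  qcommute_Fr_F_lt (F_far rels) (F_serre rels) (F_sq rels) F_anticomm hi hj.
have [s2 [z2 gt]] :=
  qcommute_sym (qcommute_Fr_F_gt (F_far rels) (F_serre rels) (F_sq rels) F_anticomm hi hj).
exists z1, z2, s1, s2; split; first by rewrite lt F_leE.
by rewrite gt F_geE.
Qed.
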